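(* Let $\lambda_0<0<\lambda_1$ be real. Then for all real $t\ne0$, $$T^{(0)}_{(\lambda_0,\lambda_1)}(t)=\frac12\frac{\Phi_{(\lambda_0,\lambda_1,-\lambda_0,-\lambda_1)}(t)}{\Phi_{(\lambda_0-\lambda_1,\lambda_1-\lambda_0,0,-\lambda_0-\lambda_1)}(t)}\le\max\left\{\frac{2\lambda_1-\lambda_0}{2\lambda_1-4\lambda_0},\frac{\lambda_1-2\lambda_0}{4\lambda_1-2\lambda_0}\right\}<1.$$
   Context: For real $\lambda_0,\dots,\lambda_N$, the fundamental function $\Phi_{(\lambda_0,\dots,\lambda_N)}$ is the unique solution $u$ of $\prod_{j=0}^N(\frac{d}{dt}-\lambda_j)u=0$ with $u^{(k)}(0)=0$ for $0\le k\le N-1$ and $u^{(N)}(0)=1$. *)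

From Stdlib Require Import Reals List ClassicalEpsilon.
From Coquelicot Require Import Coquelicot.
Import ListNotations.
Open Scope R_scope.

Definition shiftD (l : R) (f : R -> R) : R -> R :=
  fun t => Derive f t - l * f t.

(* prod_{j} (d/dt - l_j) applied to f (operators applied in list order;
   they commute on sufficiently smooth f) *)
Fixpoint applyOps (ls : list R) (f : R -> R) : R -> R :=
  match ls with
  | nil => f
  | l :: ls' => applyOps ls' (shiftD l f)
  end.

Definition is_fundamental (ls : list R) (u : R -> R) : Prop :=
  (forall k t, (k <= length ls)%nat -> ex_derive_n u k t) /\
  (forall t, applyOps ls u t = 0) /\
  (forall k, (k < length ls - 1)%nat -> Derive_n u k 0 = 0) /\
  Derive_n u (length ls - 1) 0 = 1.

Definition Phi (ls : list R) : R -> R :=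
  epsilon (inhabits (fun _ : R => 0)) (is_fundamental ls).

From Stdlib Require Import Reals List Lra Lia Permutation FunctionalExtensionality.
From Stdlib Require Import ClassicalEpsilon.
From Coquelicot Require Import Coquelicot.
Import ListNotations.
Open Scope R_scope.

(* [Phi ls] is the exponential generating function of the sequence [fund_seq ls], because
   [d/dt - l] acts on exponential generating functions as the shift [c |-> c (n+1) - l c n];
   uniqueness of [Phi ls] follows by peeling off one first-order factor at a time.
   Positivity comes from [(exp (- r t) F)' = exp (- r t) (F' - r F)]: if [F (0) >= 0] and
   [F' - r F >= 0] for [t > 0], then [F >= 0] for [t > 0].  The combination
   [K1 Phi_den - K2 Phi_num] is annihilated by all eight first-order factors; applied in a
   suitable order, each intermediate function has a value at 0 which is a polynomial in
   [-l0] and [l1 + l0] (resp. [l1] and [- l0 - l1]) with nonnegative coefficients, so the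
   combination is nonnegative for [t > 0].  With [K1 / K2 = (2 l1 - l0) / (l1 - 2 l0)] when
   [- l0 <= l1], and [K1 = K2] otherwise, this is the bound for [t > 0].  Negative [t]
   reduces to positive [t] through [Phi ls (- t) = - Phi (map Ropp ls) t] (for four roots),
   which exchanges the roles of [- l0] and [l1]. *)

(** * Fundamental sequences *)

Definition shiftS (r : R) (g : nat -> R) : nat -> R := fun n => g (S n) - r * g n.

Fixpoint applyShiftS (rs : list R) (g : nat -> R) : nat -> R :=
  match rs with
  | [] => g
  | r :: rs' => applyShiftS rs' (shiftS r g)
  end.

(* The Taylor coefficients of [Phi ls] at 0. *)
Fixpoint fund_seq (ls : list R) : nat -> R :=
  match ls with
  | [] => fun _ => 0
  | l :: ls' =>
      fix c n := match n with
                 | O => match ls' with [] => 1 | _ => 0 end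
                 | S m => l * c m + fund_seq ls' m
                 end
  end.

Lemma shiftS_fund_seq (l : R) (ls : list R) : shiftS l (fund_seq (l :: ls)) = fund_seq ls.
Proof. apply functional_extensionality => n. unfold shiftS. simpl. ring. Qed.

Lemma applyShiftS_fund_seq (ls : list R) : applyShiftS ls (fund_seq ls) = fun _ => 0.
Proof.
  induction ls as [|l ls IH]; [reflexivity|].
  cbn [applyShiftS]. rewrite shiftS_fund_seq. exact IH.
Qed.

Lemma fund_seq_init (ls : list R) (k : nat) : (k < length ls)%nat ->
  fund_seq ls k = if Nat.eqb k (length ls - 1) then 1 else 0.
Proof.
  revert k. induction ls as [|l ls IH]; intros k Hk; simpl in Hk; [lia|].
  induction k as [|k IHk].
  - destruct ls; reflexivity.
  - change (fund_seq (l :: ls) (S k)) with (l * fund_seq (l :: ls) k + fund_seq ls k).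
    rewrite IHk, IH by lia. simpl length.
    replace (S (length ls) - 1)%nat with (length ls) by lia.
    destruct (Nat.eqb_spec k (length ls)); [lia|].
    destruct (Nat.eqb_spec k (length ls - 1)), (Nat.eqb_spec (S k) (length ls)); try lia; ring.
Qed.

Lemma shiftS_comm (r q : R) (g : nat -> R) : shiftS r (shiftS q g) = shiftS q (shiftS r g).
Proof. apply functional_extensionality => n. unfold shiftS. ring. Qed.

Lemma applyShiftS_app (rs qs : list R) (g : nat -> R) :
  applyShiftS (rs ++ qs) g = applyShiftS qs (applyShiftS rs g).
Proof. revert g. induction rs as [|r rs IH]; intro g; [reflexivity|]. apply IH. Qed.

Lemma applyShiftS_perm (rs qs : list R) (g : nat -> R) :
  Permutation rs qs -> applyShiftS rs g = applyShiftS qs g.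
Proof.
  intro Hp. revert g. induction Hp as [| r rs qs _ IH | r q rs | rs qs ps _ IH1 _ IH2]; intro g.
  - reflexivity.
  - apply IH.
  - cbn [applyShiftS]. rewrite shiftS_comm. reflexivity.
  - rewrite IH1. apply IH2.
Qed.

Lemma applyShiftS_lin (rs : list R) (al be : R) (g h : nat -> R) :
  applyShiftS rs (fun n => al * g n - be * h n)
  = fun n => al * applyShiftS rs g n - be * applyShiftS rs h n.
Proof.
  revert g h. induction rs as [|r rs IH]; intros g h; [reflexivity|].
  cbn [applyShiftS]. rewrite <- IH. f_equal.
  apply functional_extensionality => n. unfold shiftS. ring.
Qed.

Lemma applyShiftS_inj (rs : list R) (g h : nat -> R) :
  (forall k, (k < length rs)%nat -> g k = h k) ->
  applyShiftS rs g = applyShiftS rs h -> g = h.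
Proof.
  revert g h. induction rs as [|r rs IH]; intros g h Hinit Hop; [exact Hop|].
  assert (Hs : shiftS r g = shiftS r h).
  { apply IH; [| exact Hop]. intros k Hk. unfold shiftS.
    rewrite !Hinit by (simpl; lia). reflexivity. }
  apply functional_extensionality => n. induction n as [|n IHn].
  - apply Hinit. simpl. lia.
  - assert (E := equal_f Hs n). unfold shiftS in E. rewrite IHn in E. lra.
Qed.

Lemma fund_seq_perm (ls ms : list R) : Permutation ls ms -> fund_seq ls = fund_seq ms.
Proof.
  intro Hp. apply (applyShiftS_inj ms).
  - intros k Hk. rewrite !fund_seq_init; rewrite ?(Permutation_length Hp); auto.
  - rewrite <- (applyShiftS_perm _ _ _ Hp), !applyShiftS_fund_seq. reflexivity.
Qed.

Lemma fund_seq_opp (ls : list R) (n : nat) :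
  fund_seq (map Ropp ls) n = (-1) ^ (length ls + n + 1) * fund_seq ls n.
Proof.
  revert n. induction ls as [|l ls IH]; intro n; [simpl; ring|].
  induction n as [|n IHn].
  - destruct ls; simpl; ring.
  - change (fund_seq (map Ropp (l :: ls)) (S n))
      with (- l * fund_seq (map Ropp (l :: ls)) n + fund_seq (map Ropp ls) n).
    change (fund_seq (l :: ls) (S n)) with (l * fund_seq (l :: ls) n + fund_seq ls n).
    rewrite IHn, IH. simpl length.
    replace (S (length ls) + S n + 1)%nat with (S (S (length ls + n + 1))) by lia.
    replace (S (length ls) + n + 1)%nat with (S (length ls + n + 1)) by lia.
    simpl pow. ring.
Qed.

(** * Exponential generating functions *)

Definition exp_bounded (g : nat -> R) : Prop :=
  exists C B, 0 <= C /\ 1 <= B /\ forall n, Rabs (g n) <= C * B ^ n.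

Lemma exp_bounded_lin (al be : R) (g h : nat -> R) :
  exp_bounded g -> exp_bounded h -> exp_bounded (fun n => al * g n - be * h n).
Proof.
  intros [C1 [B1 [HC1 [HB1 H1]]]] [C2 [B2 [HC2 [HB2 H2]]]].
  set (B := Rmax B1 B2).
  assert (HB1B : B1 <= B) by apply Rmax_l. assert (HB2B : B2 <= B) by apply Rmax_r.
  exists (Rabs al * C1 + Rabs be * C2), B.
  pose proof (Rabs_pos al); pose proof (Rabs_pos be).
  split; [nra | split; [lra |]].
  intro n. unfold Rminus. eapply Rle_trans; [apply Rabs_triang|].
  rewrite Rabs_Ropp, !Rabs_mult.
  assert (B1 ^ n <= B ^ n) by (apply pow_incr; lra).
  assert (B2 ^ n <= B ^ n) by (apply pow_incr; lra).
  assert (Rabs (g n) <= C1 * B ^ n) by (eapply Rle_trans; [apply H1 | nra]).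
  assert (Rabs (h n) <= C2 * B ^ n) by (eapply Rle_trans; [apply H2 | nra]).
  assert (Rabs al * Rabs (g n) <= Rabs al * (C1 * B ^ n)) by (apply Rmult_le_compat_l; auto).
  assert (Rabs be * Rabs (h n) <= Rabs be * (C2 * B ^ n)) by (apply Rmult_le_compat_l; auto).
  nra.
Qed.

Lemma exp_bounded_succ (g : nat -> R) : exp_bounded g -> exp_bounded (fun n => g (S n)).
Proof.
  intros [C [B [HC [HB H]]]]. exists (C * B), B. split; [nra | split; [exact HB |]].
  intro n. rewrite Rmult_assoc. apply H.
Qed.

Lemma exp_bounded_shiftS (r : R) (g : nat -> R) : exp_bounded g -> exp_bounded (shiftS r g).
Proof.
  intro Hg. unfold shiftS.
  assert (E : (fun n => g (S n) - r * g n) = fun n => 1 * g (S n) - r * g n)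
    by (apply functional_extensionality => n; ring).
  rewrite E. apply exp_bounded_lin; [apply exp_bounded_succ|]; exact Hg.
Qed.

Lemma exp_bounded_of_shiftS (r : R) (g : nat -> R) :
  exp_bounded (shiftS r g) -> exp_bounded g.
Proof.
  intros [C [B [HC [HB H]]]].
  set (K := Rabs (g O) + C). set (B' := B + Rabs r).
  pose proof (Rabs_pos r); pose proof (Rabs_pos (g O)).
  exists K, B'. split; [unfold K; lra | split; [unfold B'; lra |]].
  induction n as [|n IHn]; [simpl; unfold K; lra|].
  assert (Egn : g (S n) = r * g n + shiftS r g n) by (unfold shiftS; ring).
  rewrite Egn. eapply Rle_trans; [apply Rabs_triang|]. rewrite Rabs_mult.
  assert (HBn : B ^ n <= B' ^ n) by (apply pow_incr; unfold B'; lra).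
  assert (0 <= B ^ n) by (apply pow_le; lra).
  assert (Rabs r * Rabs (g n) <= Rabs r * (K * B' ^ n)) by (apply Rmult_le_compat_l; auto).
  assert (C * B ^ n <= K * B' ^ n) by (apply Rmult_le_compat; unfold K; lra).
  assert (0 <= K * B' ^ n) by (apply Rmult_le_pos; [unfold K | apply pow_le; unfold B']; lra).
  pose proof (H n). simpl. unfold B' at 1. nra.
Qed.

Lemma exp_bounded_fund_seq (ls : list R) : exp_bounded (fund_seq ls).
Proof.
  induction ls as [|l ls IH].
  - exists 0, 1. repeat split; try lra. intro n. simpl. rewrite Rabs_R0. lra.
  - apply (exp_bounded_of_shiftS l). rewrite shiftS_fund_seq. exact IH.
Qed.

Definition egf (g : nat -> R) (t : R) : R :=
  PSeries (fun n => g n / INR (Factorial.fact n)) t.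

Lemma pow_div_fact_le_exp (y : R) (n : nat) : 0 <= y -> y ^ n / INR (Factorial.fact n) <= exp y.
Proof.
  intro Hy. eapply Rle_trans; [| apply (exp_ge_taylor y n Hy)].
  destruct n as [|n]; [simpl; lra|].
  rewrite tech5.
  assert (0 <= sum_f_R0 (fun k => y ^ k / INR (Factorial.fact k)) n).
  { apply cond_pos_sum. intro k. apply Rmult_le_pos; [apply pow_le; lra|].
    apply Rlt_le, Rinv_0_lt_compat, INR_fact_lt_0. }
  lra.
Qed.

Lemma egf_radius (g : nat -> R) (x : R) : exp_bounded g ->
  Rbar_lt (Rabs x) (CV_radius (fun n => g n / INR (Factorial.fact n))).
Proof.
  intros [C [B [HC [HB Hg]]]].
  set (r := Rabs x + 1).
  assert (Hr : 0 <= r) by (unfold r; pose proof (Rabs_pos x); lra).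
  assert (Hin : Rbar_le r (CV_radius (fun n => g n / INR (Factorial.fact n)))).
  { apply (proj1 (CV_radius_bounded _)). exists (C * exp (B * r)). intro n.
    assert (Hf : 0 < INR (Factorial.fact n)) by apply INR_fact_lt_0.
    rewrite Rabs_mult, Rabs_div by lra.
    rewrite (Rabs_right (INR _)) by lra.
    rewrite (Rabs_right (r ^ n)) by (apply Rle_ge, pow_le; lra).
    apply Rle_trans with (C * ((B * r) ^ n / INR (Factorial.fact n))).
    - rewrite Rpow_mult_distr. unfold Rdiv.
      replace (C * (B ^ n * r ^ n * / INR (Factorial.fact n)))
        with (C * B ^ n * / INR (Factorial.fact n) * r ^ n) by ring.
      apply Rmult_le_compat_r; [apply pow_le; lra|].
      apply Rmult_le_compat_r; [apply Rlt_le, Rinv_0_lt_compat; lra | apply Hg].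
    - apply Rmult_le_compat_l; [exact HC|]. apply pow_div_fact_le_exp. nra. }
  destruct (CV_radius _) as [R0| |]; simpl in *; unfold r in Hin; auto; lra.
Qed.

Lemma is_derive_egf (g : nat -> R) (t : R) : exp_bounded g ->
  is_derive (egf g) t (egf (fun n => g (S n)) t).
Proof.
  intro Hb. unfold egf.
  replace (PSeries (fun n => g (S n) / INR (Factorial.fact n)) t)
    with (PSeries (PS_derive (fun n => g n / INR (Factorial.fact n))) t).
  - apply is_derive_PSeries, egf_radius, Hb.
  - apply PSeries_ext => n. unfold PS_derive.
    rewrite fact_simpl, mult_INR. field.
    split; apply not_0_INR; [apply Factorial.fact_neq_0 | lia].
Qed.

Lemma egf_0 (g : nat -> R) : egf g 0 = g O.
Proof. unfold egf. rewrite PSeries_0. simpl. field. Qed.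

Lemma Derive_n_egf_0 (g : nat -> R) (k : nat) : exp_bounded g -> Derive_n (egf g) k 0 = g k.
Proof.
  intro Hb. unfold egf. rewrite Derive_n_coef.
  - field. apply not_0_INR, Factorial.fact_neq_0.
  - pose proof (egf_radius g 0 Hb) as H. rewrite Rabs_R0 in H. exact H.
Qed.

Lemma egf_lin (al be : R) (g h : nat -> R) (t : R) : exp_bounded g -> exp_bounded h ->
  egf (fun n => al * g n - be * h n) t = al * egf g t - be * egf h t.
Proof.
  intros Hg Hh. unfold egf.
  rewrite <- (PSeries_scal al), <- (PSeries_scal be), <- PSeries_minus.
  - apply PSeries_ext => n. unfold PS_minus, PS_scal, PS_plus, PS_opp, plus, opp, scal.
    simpl. unfold mult. simpl. field. apply not_0_INR, Factorial.fact_neq_0.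
  - apply ex_pseries_scal; [apply Rmult_comm | apply CV_radius_inside, egf_radius, Hg].
  - apply ex_pseries_scal; [apply Rmult_comm | apply CV_radius_inside, egf_radius, Hh].
Qed.

Lemma egf_zero (t : R) : egf (fun _ => 0) t = 0.
Proof.
  unfold egf. transitivity (PSeries (fun _ : nat => 0) t); [| apply PSeries_const_0].
  apply PSeries_ext => n. unfold Rdiv. ring.
Qed.

Lemma egf_opp_arg (g : nat -> R) (t : R) : egf g (- t) = egf (fun n => (-1) ^ n * g n) t.
Proof.
  unfold egf, PSeries. apply Series_ext => n.
  replace (- t) with ((-1) * t) by ring. rewrite Rpow_mult_distr. unfold Rdiv. ring.
Qed.

Lemma shiftD_egf (l : R) (g : nat -> R) : exp_bounded g -> shiftD l (egf g) = egf (shiftS l g).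
Proof.
  intro Hb. apply functional_extensionality => t. unfold shiftD, shiftS.
  rewrite (is_derive_unique _ _ _ (is_derive_egf g t Hb)).
  replace (fun n => g (S n) - l * g n) with (fun n => 1 * g (S n) - l * g n)
    by (apply functional_extensionality => n; ring).
  rewrite egf_lin; [ring | apply exp_bounded_succ |]; exact Hb.
Qed.

Lemma applyOps_egf (ls : list R) (g : nat -> R) : exp_bounded g ->
  applyOps ls (egf g) = egf (applyShiftS ls g).
Proof.
  revert g. induction ls as [|l ls IH]; intros g Hb; [reflexivity|].
  cbn [applyOps applyShiftS]. rewrite shiftD_egf by exact Hb.
  apply IH, exp_bounded_shiftS, Hb.
Qed.

(** * The fundamental function as a generating function *)

Definition ex_derive_upto (n : nat) (u : R -> R) : Prop :=
  forall k t, (k <= n)%nat -> ex_derive_n u k t.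

Lemma Derive_n_Derive (u : R -> R) (k : nat) (t : R) :
  Derive_n (Derive u) k t = Derive_n u (S k) t.
Proof.
  change (Derive_n (Derive_n u 1) k t = Derive_n u (S k) t).
  rewrite Derive_n_comp. f_equal. lia.
Qed.

Lemma ex_derive_upto_Derive (n : nat) (u : R -> R) :
  ex_derive_upto (S n) u -> ex_derive_upto n (Derive u).
Proof.
  intros Hu [|k] t Hk; [exact I|].
  apply (ex_derive_ext (Derive_n u (S k))); [intro y; symmetry; apply Derive_n_Derive|].
  apply (Hu (S (S k))). lia.
Qed.

Lemma ex_derive_upto_shiftD (n : nat) (l : R) (u : R -> R) :
  ex_derive_upto (S n) u -> ex_derive_upto n (shiftD l u).
Proof.
  intros Hu k t Hk. unfold shiftD.
  apply ex_derive_n_minus; apply filter_forall; intros y j Hj.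
  - apply ex_derive_upto_Derive in Hu. apply Hu. lia.
  - apply ex_derive_n_scal_l, Hu. lia.
Qed.

Lemma Derive_n_shiftD (n : nat) (l : R) (u : R -> R) (t : R) : ex_derive_upto (S n) u ->
  Derive_n (shiftD l u) n t = Derive_n u (S n) t - l * Derive_n u n t.
Proof.
  intro Hu. unfold shiftD.
  rewrite Derive_n_minus, Derive_n_scal_l, Derive_n_Derive; [reflexivity | |];
    apply filter_forall; intros y j Hj.
  - apply ex_derive_upto_Derive in Hu. apply Hu. lia.
  - apply ex_derive_n_scal_l, Hu. lia.
Qed.

Lemma is_derive_exp_mul (r : R) (f : R -> R) (x df : R) : is_derive f x df ->
  is_derive (fun y => exp (r * y) * f y) x (exp (r * x) * (df + r * f x)).
Proof.
  intro Hf.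
  assert (He : is_derive (fun y => exp (r * y)) x (r * exp (r * x)))
    by (auto_derive; [exact I | ring]).
  replace (exp (r * x) * (df + r * f x))
    with (plus (mult (r * exp (r * x)) (f x)) (mult (exp (r * x)) df))
    by (unfold plus, mult; simpl; ring).
  exact (is_derive_mult _ _ x _ _ He Hf Rmult_comm).
Qed.

Lemma eq_0_of_is_derive_scal (l : R) (w : R -> R) :
  (forall t, is_derive w t (l * w t)) -> w 0 = 0 -> forall t, w t = 0.
Proof.
  intros Hw H0 t.
  set (h := fun y => exp (- l * y) * w y).
  assert (Hh : forall y, is_derive h y 0).
  { intro y. replace 0 with (exp (- l * y) * (l * w y + - l * w y)) by ring.
    apply is_derive_exp_mul, Hw. }
  destruct (MVT_gen h 0 t (fun _ => 0)) as [c [_ Hc]].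
  - intros y _. apply Hh.
  - intros y _. apply continuity_pt_filterlim, (ex_derive_continuous h y). exists 0. apply Hh.
  - unfold h in Hc. rewrite H0, Rmult_0_r, Rmult_0_l in Hc.
    pose proof (exp_pos (- l * t)). nra.
Qed.

Lemma applyOps_inj (ls : list R) (u v : R -> R) :
  ex_derive_upto (length ls) u -> ex_derive_upto (length ls) v ->
  (forall k, (k < length ls)%nat -> Derive_n u k 0 = Derive_n v k 0) ->
  (forall t, applyOps ls u t = applyOps ls v t) -> forall t, u t = v t.
Proof.
  revert u v. induction ls as [|l ls IH]; intros u v Hu Hv Hinit Hop; [exact Hop|].
  simpl length in *.
  assert (Hs : forall t, shiftD l u t = shiftD l v t).
  { apply IH; [apply ex_derive_upto_shiftD, Hu | apply ex_derive_upto_shiftD, Hv | | exact Hop].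
    intros k Hk.
    rewrite !Derive_n_shiftD by (intros j s Hj; (apply Hu || apply Hv); lia).
    rewrite !Hinit by lia. reflexivity. }
  assert (Hw : forall t, is_derive (fun y => u y - v y) t (l * (u t - v t))).
  { intro t. specialize (Hs t). unfold shiftD in Hs.
    replace (l * (u t - v t)) with (Derive u t - Derive v t) by lra.
    apply (is_derive_minus u v); apply Derive_correct; [apply (Hu 1%nat) | apply (Hv 1%nat)]; lia. }
  intro t. apply Rminus_diag_uniq.
  apply (eq_0_of_is_derive_scal l (fun y => u y - v y) Hw).
  apply Rminus_diag_eq, (Hinit O). lia.
Qed.

Lemma is_fundamental_unique (ls : list R) (u v : R -> R) :
  is_fundamental ls u -> is_fundamental ls v -> forall t, u t = v t.
Proof.
  intros [Hu [Ou [Iu Nu]]] [Hv [Ov [Iv Nv]]].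
  apply (applyOps_inj ls); [exact Hu | exact Hv | | intro t; rewrite Ou, Ov; reflexivity].
  intros k Hk. destruct (Nat.eq_dec k (length ls - 1)) as [->|Hne].
  - rewrite Nu, Nv. reflexivity.
  - rewrite Iu, Iv by lia. reflexivity.
Qed.

Lemma egf_fund_seq_fundamental (ls : list R) : ls <> [] -> is_fundamental ls (egf (fund_seq ls)).
Proof.
  intro Hne.
  assert (Hlen : (0 < length ls)%nat) by (destruct ls; [congruence | simpl; lia]).
  pose proof (exp_bounded_fund_seq ls) as Hb.
  split; [| split; [| split]].
  - intros k t _. apply ex_derive_n_PSeries, egf_radius, Hb.
  - intro t. rewrite applyOps_egf, applyShiftS_fund_seq by exact Hb. apply egf_zero.
  - intros k Hk. rewrite Derive_n_egf_0, fund_seq_init by (exact Hb || lia).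
    destruct (Nat.eqb_spec k (length ls - 1)); [lia | reflexivity].
  - rewrite Derive_n_egf_0, fund_seq_init by (exact Hb || lia). rewrite Nat.eqb_refl. reflexivity.
Qed.

Lemma Phi_egf (ls : list R) (t : R) : ls <> [] -> Phi ls t = egf (fund_seq ls) t.
Proof.
  intro Hne. pose proof (egf_fund_seq_fundamental ls Hne) as Hfund.
  apply (is_fundamental_unique ls); [| exact Hfund].
  exact (epsilon_spec (inhabits (fun _ : R => 0)) (is_fundamental ls) (ex_intro _ _ Hfund)).
Qed.

Lemma Phi_perm (ls ms : list R) (t : R) : ls <> [] -> Permutation ls ms -> Phi ls t = Phi ms t.
Proof.
  intros Hne Hp.
  assert (Hne' : ms <> []) by (intro E; subst; apply Hne, Permutation_nil, Permutation_sym, Hp).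
  rewrite !Phi_egf, (fund_seq_perm _ _ Hp) by assumption. reflexivity.
Qed.

Lemma Phi_opp (ls : list R) (t : R) : ls <> [] ->
  Phi ls (- t) = (-1) ^ (length ls + 1) * Phi (map Ropp ls) t.
Proof.
  intro Hne. assert (Hne' : map Ropp ls <> []) by (destruct ls; [congruence | discriminate]).
  rewrite !Phi_egf, egf_opp_arg by assumption.
  set (c := (-1) ^ (length ls + 1)).
  replace (fun n => (-1) ^ n * fund_seq ls n)
    with (fun n => c * fund_seq (map Ropp ls) n - 0 * fund_seq ls n).
  - rewrite egf_lin by apply exp_bounded_fund_seq. ring.
  - apply functional_extensionality => n. rewrite fund_seq_opp.
    replace (length ls + n + 1)%nat with (n + (length ls + 1))%nat by lia.
    assert (Hc : c * c = 1).
    { unfold c. rewrite <- Rpow_mult_distr. replace (-1 * -1) with 1 by ring. apply pow1. }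
    rewrite pow_add. fold c.
    transitivity (c * c * ((-1) ^ n * fund_seq ls n)); [ring | rewrite Hc; ring].
Qed.

(** * Positivity *)

Lemma le_of_is_derive_nonneg (h dh : R -> R) (a b : R) :
  (forall x, is_derive h x (dh x)) -> a <= b -> (forall x, a < x < b -> 0 <= dh x) -> h a <= h b.
Proof.
  intros Hh Hab Hpos. destruct (Req_dec a b) as [<-|Hne]; [lra|].
  destruct (MVT_cor2 h dh a b) as [c [Hc Hcab]]; [lra | intros c _; apply is_derive_Reals, Hh |].
  pose proof (Hpos c Hcab). nra.
Qed.

Lemma lt_of_is_derive_pos (h dh : R -> R) (a b : R) :
  (forall x, is_derive h x (dh x)) -> a < b -> (forall x, a < x < b -> 0 < dh x) -> h a < h b.
Proof.
  intros Hh Hab Hpos.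
  destruct (MVT_cor2 h dh a b) as [c [Hc Hcab]]; [lra | intros c _; apply is_derive_Reals, Hh |].
  pose proof (Hpos c Hcab). nra.
Qed.

Lemma is_derive_exp_weight_egf (r : R) (g : nat -> R) (x : R) : exp_bounded g ->
  is_derive (fun y => exp (- r * y) * egf g y) x (exp (- r * x) * egf (shiftS r g) x).
Proof.
  intro Hb. rewrite <- shiftD_egf by exact Hb. unfold shiftD.
  rewrite (is_derive_unique _ _ _ (is_derive_egf g x Hb)).
  replace (egf (fun n => g (S n)) x - r * egf g x)
    with (egf (fun n => g (S n)) x + - r * egf g x) by ring.
  apply is_derive_exp_mul, is_derive_egf, Hb.
Qed.

Lemma egf_ge_exp (r : R) (g : nat -> R) (t : R) : exp_bounded g ->
  (forall x, 0 < x -> 0 <= egf (shiftS r g) x) -> 0 <= t -> g O * exp (r * t) <= egf g t.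
Proof.
  intros Hb Hs Ht.
  assert (Hmono : exp (- r * 0) * egf g 0 <= exp (- r * t) * egf g t).
  { apply (le_of_is_derive_nonneg _ _ 0 t (fun x => is_derive_exp_weight_egf r g x Hb) Ht).
    intros x Hx. apply Rmult_le_pos; [apply Rlt_le, exp_pos | apply Hs; lra]. }
  rewrite egf_0, Rmult_0_r, exp_0, Rmult_1_l in Hmono.
  replace (egf g t) with (exp (r * t) * (exp (- r * t) * egf g t))
    by (rewrite <- Rmult_assoc, <- exp_plus; replace (r * t + - r * t) with 0 by ring;
        rewrite exp_0; ring).
  pose proof (exp_pos (r * t)). nra.
Qed.

Lemma egf_pos_of_shiftS_pos (r : R) (g : nat -> R) (t : R) : exp_bounded g -> 0 <= g O ->
  (forall x, 0 < x -> 0 < egf (shiftS r g) x) -> 0 < t -> 0 < egf g t.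
Proof.
  intros Hb H0 Hs Ht.
  assert (Hmono : exp (- r * 0) * egf g 0 < exp (- r * t) * egf g t).
  { apply (lt_of_is_derive_pos _ _ 0 t (fun x => is_derive_exp_weight_egf r g x Hb) Ht).
    intros x Hx. apply Rmult_lt_0_compat; [apply exp_pos | apply Hs; lra]. }
  rewrite egf_0, Rmult_0_r, exp_0, Rmult_1_l in Hmono.
  pose proof (exp_pos (- r * t)). nra.
Qed.

Lemma Phi_pos (ls : list R) (t : R) : ls <> [] -> 0 < t -> 0 < Phi ls t.
Proof.
  intro Hne. rewrite Phi_egf by exact Hne. revert Hne t.
  induction ls as [|l ls IH]; intros Hne t Ht; [congruence|].
  destruct ls as [|l' ls].
  - assert (H : 1 * exp (l * t) <= egf (fund_seq [l]) t).
    { apply (egf_ge_exp l (fund_seq [l]) t (exp_bounded_fund_seq _)); [| lra].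
      intros x _. rewrite shiftS_fund_seq. change (fund_seq []) with (fun _ : nat => 0).
      rewrite egf_zero. lra. }
    pose proof (exp_pos (l * t)). lra.
  - apply (egf_pos_of_shiftS_pos l); [apply exp_bounded_fund_seq | simpl; lra | | exact Ht].
    rewrite shiftS_fund_seq. apply IH. discriminate.
Qed.

Fixpoint nonneg_at_0_chain (rs : list R) (g : nat -> R) : Prop :=
  match rs with
  | [] => True
  | r :: rs' => 0 <= g O /\ nonneg_at_0_chain rs' (shiftS r g)
  end.

Lemma egf_nonneg_of_chain (rs : list R) (g : nat -> R) : exp_bounded g ->
  applyShiftS rs g = (fun _ => 0) -> nonneg_at_0_chain rs g -> forall t, 0 < t -> 0 <= egf g t.
Proof.
  revert g. induction rs as [|r rs IH]; intros g Hb Hann Hchain t Ht.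
  - simpl in Hann. subst g. rewrite egf_zero. lra.
  - destruct Hchain as [H0 Hchain].
    assert (Hs : forall x, 0 < x -> 0 <= egf (shiftS r g) x)
      by (apply IH; [apply exp_bounded_shiftS | |]; assumption).
    pose proof (egf_ge_exp r g t Hb Hs ltac:(lra)).
    pose proof (exp_pos (r * t)). nra.
Qed.

(** * The combination of the two fundamental functions *)

Lemma applyShiftS_zero (rs : list R) : applyShiftS rs (fun _ => 0) = fun _ => 0.
Proof.
  induction rs as [|r rs IH]; [reflexivity|]. cbn [applyShiftS].
  replace (shiftS r (fun _ => 0)) with (fun _ : nat => 0)
    by (apply functional_extensionality => n; unfold shiftS; ring).
  exact IH.
Qed.

Lemma applyShiftS_fund_seq_perm (rs ls ms : list R) :
  Permutation rs (ls ++ ms) -> applyShiftS rs (fund_seq ls) = fun _ => 0.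
Proof.
  intro Hp. rewrite (applyShiftS_perm _ _ _ Hp), applyShiftS_app, applyShiftS_fund_seq.
  apply applyShiftS_zero.
Qed.

(* [split_list_at x r] returns [(r1, r2)] with [r = r1 ++ x :: r2] syntactically. *)
Ltac split_list_at x r :=
  lazymatch r with
  | x :: ?r2 => constr:(([] : list R, r2))
  | ?y :: ?r' => let p := split_list_at x r' in
                 lazymatch p with (?p1, ?p2) => constr:((y :: p1, p2)) end
  end.

Ltac solve_permutation :=
  lazymatch goal with
  | |- Permutation [] [] => apply perm_nil
  | |- Permutation (?x :: ?l) ?r =>
      lazymatch split_list_at x r with
      | (?r1, ?r2) => change (Permutation (x :: l) (r1 ++ x :: r2));
                      apply Permutation_cons_app; simpl; solve_permutation
      end
  end.

Section Combination.

Variables l0 l1 : R.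

Definition num_roots : list R := [l0; l1; - l0; - l1].
Definition den_roots : list R := [l0 - l1; l1 - l0; 0; - l0 - l1].

Definition combination (K1 K2 : R) : nat -> R :=
  fun n => K1 * fund_seq den_roots n - K2 * fund_seq num_roots n.

(* An order of [num_roots ++ den_roots] along which the chain of values at 0 stays
   nonnegative; see [nonneg_chain_opp_le] and [nonneg_chain_lt_opp]. *)
Definition factor_order : list R := [l0; - l1; l0 - l1; 0; - l0; l1; - l0 - l1; l1 - l0].

Lemma factor_order_perm : Permutation factor_order (num_roots ++ den_roots).
Proof. unfold factor_order, num_roots, den_roots. simpl. solve_permutation. Qed.

Lemma applyShiftS_combination (K1 K2 : R) :
  applyShiftS factor_order (combination K1 K2) = fun _ => 0.
Proof.
  unfold combination. rewrite applyShiftS_lin.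
  rewrite (applyShiftS_fund_seq_perm _ _ _ factor_order_perm).
  rewrite (applyShiftS_fund_seq_perm factor_order den_roots num_roots)
    by (eapply perm_trans; [apply factor_order_perm | apply Permutation_app_comm]).
  apply functional_extensionality => n. ring.
Qed.

Lemma Phi_combination_nonneg (K1 K2 t : R) :
  nonneg_at_0_chain factor_order (combination K1 K2) -> 0 < t ->
  K2 * Phi num_roots t <= K1 * Phi den_roots t.
Proof.
  intros Hchain Ht.
  assert (Hb := exp_bounded_fund_seq).
  pose proof (egf_nonneg_of_chain factor_order (combination K1 K2)
    (exp_bounded_lin _ _ _ _ (Hb _) (Hb _)) (applyShiftS_combination K1 K2) Hchain t Ht) as H.
  unfold combination in H. rewrite egf_lin in H by apply Hb.
  rewrite !Phi_egf by discriminate. lra.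
Qed.

End Combination.

Ltac nonneg_poly :=
  repeat match goal with
  | |- 0 <= _ + _ => apply Rplus_le_le_0_compat
  | |- 0 <= _ * _ => apply Rmult_le_pos
  | |- 0 <= _ ^ _ => apply pow_le
  end; lra.

Lemma nonneg_chain_opp_le (l0 l1 : R) : l0 < 0 -> - l0 <= l1 ->
  nonneg_at_0_chain (factor_order l0 l1) (combination l0 l1 (2 * l1 - l0) (l1 - 2 * l0)).
Proof.
  intros H0 H1.
  assert (Hsub : exists a x, 0 < a /\ 0 <= x /\ l0 = - a /\ l1 = a + x)
    by (exists (- l0), (l1 + l0); repeat split; lra).
  destruct Hsub as (a & x & ha & hx & -> & ->).
  unfold factor_order, combination, num_roots, den_roots. simpl nonneg_at_0_chain.
  unfold shiftS. simpl. repeat split; ring_simplify; nonneg_poly.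
Qed.

Lemma nonneg_chain_lt_opp (l0 l1 : R) : 0 < l1 -> l1 < - l0 ->
  nonneg_at_0_chain (factor_order l0 l1) (combination l0 l1 1 1).
Proof.
  intros H0 H1.
  assert (Hsub : exists b x, 0 < b /\ 0 <= x /\ l0 = - (b + x) /\ l1 = b)
    by (exists l1, (- l0 - l1); repeat split; lra).
  destruct Hsub as (b & x & hb & hx & -> & ->).
  unfold factor_order, combination, num_roots, den_roots. simpl nonneg_at_0_chain.
  unfold shiftS. simpl. repeat split; ring_simplify; nonneg_poly.
Qed.

Definition Tbound (l0 l1 : R) : R :=
  Rmax ((2 * l1 - l0) / (2 * l1 - 4 * l0)) ((l1 - 2 * l0) / (4 * l1 - 2 * l0)).

Lemma Tbound_lt_1 (l0 l1 : R) : l0 < 0 -> 0 < l1 -> Tbound l0 l1 < 1.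
Proof.
  intros H0 H1. unfold Tbound. apply Rmax_lub_lt.
  - replace ((2 * l1 - l0) / (2 * l1 - 4 * l0)) with (1 - 3 * - l0 / (2 * l1 - 4 * l0))
      by (field; lra).
    assert (0 < 3 * - l0 / (2 * l1 - 4 * l0)) by (apply Rdiv_lt_0_compat; lra). lra.
  - replace ((l1 - 2 * l0) / (4 * l1 - 2 * l0)) with (1 - 3 * l1 / (4 * l1 - 2 * l0))
      by (field; lra).
    assert (0 < 3 * l1 / (4 * l1 - 2 * l0)) by (apply Rdiv_lt_0_compat; lra). lra.
Qed.

Lemma Tbound_opp_swap (l0 l1 : R) : Tbound (- l1) (- l0) = Tbound l0 l1.
Proof. unfold Tbound. rewrite Rmax_comm. f_equal; f_equal; ring. Qed.

Lemma Phi_ratio_le_Tbound (l0 l1 t : R) : l0 < 0 -> 0 < l1 -> 0 < t ->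
  Phi (num_roots l0 l1) t <= 2 * Tbound l0 l1 * Phi (den_roots l0 l1) t.
Proof.
  intros H0 H1 Ht.
  pose proof (Phi_pos (den_roots l0 l1) t ltac:(discriminate) Ht) as Hden.
  destruct (Rle_lt_dec (- l0) l1) as [Hle|Hlt].
  - pose proof (Phi_combination_nonneg l0 l1 _ _ t (nonneg_chain_opp_le l0 l1 H0 Hle) Ht) as H.
    assert (HT : (2 * l1 - l0) / (2 * l1 - 4 * l0) <= Tbound l0 l1) by apply Rmax_l.
    assert (E : 2 * ((2 * l1 - l0) / (2 * l1 - 4 * l0)) * (l1 - 2 * l0) = 2 * l1 - l0)
      by (field; lra).
    rewrite <- E in H. apply Rmult_le_reg_l with (l1 - 2 * l0); [lra|].
    eapply Rle_trans; [exact H|].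
    set (c := (2 * l1 - l0) / (2 * l1 - 4 * l0)) in *.
    replace (2 * c * (l1 - 2 * l0) * Phi (den_roots l0 l1) t)
      with ((l1 - 2 * l0) * (2 * c * Phi (den_roots l0 l1) t)) by ring.
    apply Rmult_le_compat_l; [lra|]. apply Rmult_le_compat_r; lra.
  - pose proof (Phi_combination_nonneg l0 l1 _ _ t (nonneg_chain_lt_opp l0 l1 H1 Hlt) Ht) as H.
    assert (HT : (l1 - 2 * l0) / (4 * l1 - 2 * l0) <= Tbound l0 l1) by apply Rmax_r.
    set (c := (l1 - 2 * l0) / (4 * l1 - 2 * l0)) in *.
    assert (E : 2 * c = 1 + 2 * (- l0 - l1) / (4 * l1 - 2 * l0)) by (unfold c; field; lra).
    assert (0 <= 2 * (- l0 - l1) / (4 * l1 - 2 * l0))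
      by (unfold Rdiv; apply Rmult_le_pos; [lra | apply Rlt_le, Rinv_0_lt_compat; lra]).
    assert (Phi (den_roots l0 l1) t <= 2 * c * Phi (den_roots l0 l1) t)
      by (rewrite <- (Rmult_1_l (Phi _ t)) at 1; apply Rmult_le_compat_r; lra).
    assert (2 * c * Phi (den_roots l0 l1) t <= 2 * Tbound l0 l1 * Phi (den_roots l0 l1) t)
      by (apply Rmult_le_compat_r; lra).
    lra.
Qed.

Lemma Phi_num_roots_opp (l0 l1 t : R) :
  Phi (num_roots l0 l1) (- t) = - Phi (num_roots (- l1) (- l0)) t.
Proof.
  rewrite Phi_opp by discriminate. simpl. rewrite !Ropp_involutive.
  rewrite (Phi_perm _ [- l1; - l0; l1; l0]) by (discriminate || (eapply perm_trans;
    [apply perm_swap | do 2 apply perm_skip; apply perm_swap])).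
  unfold num_roots. rewrite !Ropp_involutive. ring.
Qed.

Lemma Phi_den_roots_opp (l0 l1 t : R) :
  Phi (den_roots l0 l1) (- t) = - Phi (den_roots (- l1) (- l0)) t.
Proof.
  rewrite Phi_opp by discriminate. simpl. unfold den_roots.
  replace (- (l0 - l1)) with (- l0 - - l1) by ring.
  replace (- (l1 - l0)) with (- l1 - - l0) by ring.
  replace (- (- l0 - l1)) with (- - l1 - - l0) by ring.
  rewrite Ropp_0, (Phi_perm _ [- l1 - - l0; - l0 - - l1; 0; - - l1 - - l0])
    by (discriminate || apply perm_swap).
  ring.
Qed.

Lemma half_ratio_le (p q m : R) : 0 < q -> p <= 2 * m * q -> / 2 * (p / q) <= m.
Proof.
  intros Hq H. apply Rmult_le_reg_r with (2 * q); [lra|].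
  replace (/ 2 * (p / q) * (2 * q)) with p by (field; lra). lra.
Qed.

Theorem mainTheorem17 (l0 l1 : R) (h0 : l0 < 0) (h1 : 0 < l1) :
  forall t : R, t <> 0 ->
    / 2 * (Phi [l0; l1; - l0; - l1] t / Phi [l0 - l1; l1 - l0; 0; - l0 - l1] t)
      <= Rmax ((2 * l1 - l0) / (2 * l1 - 4 * l0)) ((l1 - 2 * l0) / (4 * l1 - 2 * l0))
    /\ Rmax ((2 * l1 - l0) / (2 * l1 - 4 * l0)) ((l1 - 2 * l0) / (4 * l1 - 2 * l0)) < 1.
Proof.
  intros t Ht.
  change (/ 2 * (Phi (num_roots l0 l1) t / Phi (den_roots l0 l1) t) <= Tbound l0 l1
          /\ Tbound l0 l1 < 1).
  split; [| exact (Tbound_lt_1 l0 l1 h0 h1)].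
  destruct (Rlt_or_le 0 t) as [Hpos|Hle].
  - apply half_ratio_le; [apply Phi_pos; [discriminate | exact Hpos] |].
    exact (Phi_ratio_le_Tbound l0 l1 t h0 h1 Hpos).
  - assert (Hs : 0 < - t) by (destruct Hle; lra).
    replace t with (- - t) by ring.
    rewrite Phi_num_roots_opp, Phi_den_roots_opp, <- Tbound_opp_swap.
    pose proof (Phi_pos (den_roots (- l1) (- l0)) (- t) ltac:(discriminate) Hs).
    replace (- Phi (num_roots (- l1) (- l0)) (- t) / - Phi (den_roots (- l1) (- l0)) (- t))
      with (Phi (num_roots (- l1) (- l0)) (- t) / Phi (den_roots (- l1) (- l0)) (- t))
      by (field; lra).
    apply half_ratio_le; [assumption |].
    apply Phi_ratio_le_Tbound; lra.
Qed.
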